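(* In the algebra $\mathcal A$, for every $i\in[1,n-1]$, $$\alpha_i(x_i)\,\alpha_i(x_{i+1})=\alpha_i(x_{i+1})\,\alpha_i(x_i).$$
   Context: Let $R=\mathbb Z[\mu_1,\mu_2]$. Fix $n\ge2$. Let $\mathcal A$ be the associative algebra over $R[[x_1,\dots,x_n]]$ generated by $u_1,\dots,u_{n-1}$ subject to: the $x_j$ commute with all $u_i$; $u_iu_j=u_ju_i$ for $|i-j|>1$; $u_iu_{i+1}u_i=u_{i+1}u_iu_{i+1}$; $u_i^2=-\mu_1u_i$; and $\mu_2x_ix_{i+1}u_i=0$ for all $i$. For $i\in[1,n-1]$ and $x\in R[[x_1,\dots,x_n]]$, set $\alpha_i(x)=(1+xu_{n-1})(1+xu_{n-2})\cdots(1+xu_i)$. *)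

From HB Require Import structures.
From mathcomp Require Import all_boot all_order all_algebra.
Set Implicit Arguments. Unset Strict Implicit. Unset Printing Implicit Defensive.
Import GRing.Theory.
Local Open Scope ring_scope.

(* alpha_i(x) = (1 + x u_{n-1}) (1 + x u_{n-2}) ... (1 + x u_i),
   generators u indexed by naturals 1..n-1 (values outside are irrelevant). *)
Definition alpha (B : ringType) (u : nat -> B) (n i : nat) (x : B) : B :=
  \prod_(j <- rev (iota i (n - i))) (1 + x * u j).

(* Let g_k = (1 - mu1 a) + (b - a) u_k for central a, b.  The quadratic relation gives
   (1 + a u_k) g_k = (1 - mu1 a) (1 + b u_k), and with the braid relation it gives the
   Yang-Baxter type identity (1 + a u_k)(1 + b u_k+1) g_k = g_k+1 (1 + b u_k)(1 + a u_k+1).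
   Pushing g_k through the factors of alpha_i by descending induction on k yields
   alpha_i(a) alpha_i(b) g_i = alpha_i(b) alpha_i(a) g_i.  Since g_i need not be invertible,
   take a = x_i t and b = x_i+1 t in B[t]: there g_i = 1 - q t is right regular, so it
   cancels, and evaluating at t = 1 gives the theorem. *)

From HB Require Import structures.
From mathcomp Require Import all_boot all_order all_algebra.
From mathcomp Require Import zify.
Import GRing.Theory.
Local Open Scope ring_scope.
Set Implicit Arguments.
Unset Strict Implicit.
Unset Printing Implicit Defensive.

Definition central (R : pzRingType) (c : R) := forall r : R, GRing.comm c r.

Section Center.
Variable R : pzRingType.
Implicit Types c d v w : R.

Lemma central1 : central (1 : R).
Proof. by move=> r; apply/commr_sym/commr1. Qed.

Lemma centralB c d : central c -> central d -> central (c - d).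
Proof. by move=> cC dC r; apply/commr_sym/commrB; apply/commr_sym. Qed.

Lemma centralM c d : central c -> central d -> central (c * d).
Proof. by move=> cC dC r; apply/commr_sym/commrM; apply/commr_sym. Qed.

Lemma centralCA c : central c -> forall x y : R, x * (c * y) = c * (x * y).
Proof. by move=> cC x y; rewrite mulrA -cC mulrA. Qed.

Lemma comm_affine c0 c1 d0 d1 v w :
  central c0 -> central c1 -> central d0 -> central d1 -> GRing.comm v w ->
  GRing.comm (c0 + c1 * v) (d0 + d1 * w).
Proof.
move=> c0C c1C d0C d1C vw.
apply: commrD; first exact/commr_sym.
apply/commr_sym/commrD; first exact/commr_sym.
by apply: commrM => //; apply/commr_sym/commrM => //; apply/commr_sym.
Qed.

End Center.

Section YangBaxter.
Variables (R : pzRingType) (m v w : R).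
Hypothesis mC : central m.
Hypotheses (vQ : v * v = - (m * v)) (wQ : w * w = - (m * w)).
Hypothesis braid : v * w * v = w * v * w.
Variables a b p q : R.
Hypotheses (aC : central a) (bC : central b) (pC : central p) (qC : central q).
(* With c = q / p this says b = a + c - m a c, the product law of the factors 1 + c v. *)
Hypothesis shift : a * p + q - m * a * q = b * p.

Lemma factor_mul_affine : (1 + a * v) * (p + q * v) = p * (1 + b * v).
Proof.
have avp : a * v * p = a * p * v by rewrite -mulrA -pC mulrA.
have avqv : a * v * (q * v) = - (m * a * q * v).
  by rewrite -mulrA (centralCA qC) mulrA vQ mulrN (centralCA mC) !mulrA.
rewrite mulrDl mul1r !mulrDr mulr1 avp avqv -addrA; congr (_ + _).
by rewrite -mulNr -!mulrDl mulrA pC -shift addrCA addrA.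
Qed.

Lemma yang_baxter_affine :
  (1 + a * v) * (1 + b * w) * (p + q * v) = (p + q * w) * (1 + b * v) * (1 + a * w).
Proof.
set X := (1 + a * v) * (1 + b * w); set Y := (1 + b * v) * (1 + a * w).
have affine_mul x : x * x = - (m * x) -> (1 + a * x) * x = (1 - m * a) * x.
  by move=> xQ; rewrite mulrDl mul1r -mulrA xQ mulrN (centralCA mC) mulrBl mul1r mulrA.
have mul_affine x : x * x = - (m * x) -> x * (1 + a * x) = (1 - m * a) * x.
  by move=> xQ; rewrite mulrDr mulr1 (centralCA aC) -affine_mul // mulrDl mul1r -mulrA.
have expand c d x y : central d ->
    (1 + c * x) * (1 + d * y) = 1 + c * x + (d * y + c * d * (x * y)).
  by move=> dC; rewrite mulrDr mulr1 mulrDl mul1r -mulrA (centralCA dC) !mulrA.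
have dXY : X - Y = (a - b) * (v - w).
  rewrite /X /Y !expand // [b * a]bC opprD addrACA (addrC 1) addrKA (addrC (a * w)) addrKA.
  by rewrite mulrBr !mulrBl opprB.
have dXvY : X * v - w * Y = (1 - m * a) * (v - w).
  have -> : X * v = (1 - m * a) * v + b * (w * v + a * (v * w * v)).
    rewrite /X -mulrA [(1 + b * w) * v]mulrDl mul1r mulrDr affine_mul // -(mulrA b w v).
    by rewrite (centralCA bC) [(1 + a * v) * _]mulrDl mul1r -(mulrA a v) (mulrA v w v).
  have -> : w * Y = (1 - m * a) * w + b * (w * v + a * (w * v * w)).
    rewrite /Y [(1 + b * v) * _]mulrDl mul1r mulrDr mul_affine // -(mulrA b v) (centralCA bC).
    by rewrite mulrDr mulr1 mulrDr (centralCA aC) (centralCA aC) !mulrA.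
  by rewrite braid (addrC ((1 - m * a) * w)) addrKA mulrBr.
(* LHS - RHS = p (X - Y) + q (X v - w Y) = (p (a - b) + q (1 - m a)) (v - w). *)
have pq0 : p * (a - b) + q * (1 - m * a) = 0.
  rewrite !mulrBr mulr1 [p * b]pC -shift (pC a) (qC (m * a)).
  by rewrite -(addrA (a * p) q) opprD addNKr addNr.
apply/eqP; rewrite -subr_eq0 mulrDr -(mulrA (p + q * w)) -/Y mulrDl -(mulrA q).
rewrite -pC (centralCA qC) opprD addrACA -!mulrBr dXY dXvY !mulrA -mulrDl pq0 mul0r //.
Qed.
End YangBaxter.

Section Alpha.
Variables (R : nzRingType) (u : nat -> R) (n : nat).

Lemma alphaS k x : (k < n)%N -> alpha u n k x = alpha u n k.+1 x * (1 + x * u k).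
Proof.
by move=> kn; rewrite /alpha -subnSK //= rev_cons -cats1 big_cat big_seq1.
Qed.

Lemma alpha_ge k x : (n <= k)%N -> alpha u n k x = 1.
Proof. by move=> nk; rewrite /alpha (eqP nk) big_nil. Qed.

Lemma comm_alpha k x z : (forall j, (k <= j < n)%N -> GRing.comm z (1 + x * u j)) ->
  GRing.comm z (alpha u n k x).
Proof.
move=> zC; rewrite /alpha big_seq; apply: (big_ind (GRing.comm z)).
- exact: commr1.
- exact: commrM.
- by move=> j; rewrite mem_rev mem_iota => kj; apply: zC; lia.
Qed.

Lemma rmorph_alpha (S : nzRingType) (f : {rmorphism R -> S}) (v : nat -> S) k x :
  f \o u =1 v -> f (alpha u n k x) = alpha v n k (f x).
Proof.
by move=> fu; rewrite rmorph_prod; apply: eq_bigr => j _; rewrite rmorphD rmorph1 rmorphM -fu.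
Qed.

End Alpha.

Arguments alphaS {R u n k}.
Arguments alpha_ge {R u n k}.
Arguments comm_alpha {R u n k x z}.
Arguments rmorph_alpha {R u n S f v k x}.

Section Hecke.
Variables (R : nzRingType) (m : R) (u : nat -> R) (n : nat).
Hypothesis mC : central m.
Hypothesis uC : forall i j, (1 <= i < n)%N -> (1 <= j < n)%N ->
  (i.+1 < j)%N || (j.+1 < i)%N -> GRing.comm (u i) (u j).
Hypothesis uB : forall i, (1 <= i)%N -> (i.+1 < n)%N -> u i * u i.+1 * u i = u i.+1 * u i * u i.+1.
Hypothesis uQ : forall i, (1 <= i < n)%N -> u i * u i = - (m * u i).
Variables a b : R.
Hypotheses (aC : central a) (bC : central b).

Let pC : central (1 - m * a) := centralB (@central1 R) (centralM mC aC).
Let qC : central (b - a) := centralB bC aC.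

Lemma shift_factor : a * (1 - m * a) + (b - a) - m * a * (b - a) = b * (1 - m * a).
Proof.
rewrite !mulrBr !mulr1 (centralCA mC) -(mulrA m a a) -(bC (m * a)) opprB.
by rewrite (addrC (a - _)) !subrKA.
Qed.

Lemma alpha_swap_factor k : (1 <= k < n)%N ->
  alpha u n k a * alpha u n k.+1 b * (1 - m * a + (b - a) * u k) =
  (1 - m * a) * (alpha u n k b * alpha u n k.+1 a).
Proof.
move=> /andP[k1 kn]; have [d nE] : exists d, n = (k + d.+1)%N by exists (n - k.+1)%N; lia.
elim: d k k1 kn nE => [|d IH] k k1 kn nE.
  rewrite (alphaS a kn) (alphaS b kn) !alpha_ge ?nE ?addn1 // !mul1r !mulr1.
  by apply: factor_mul_affine => //; [apply: uQ; lia | apply: shift_factor].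
have k1n : (k.+1 < n)%N by lia.
have far x y : central x -> central y ->
    forall j, (k.+2 <= j < n)%N -> GRing.comm (1 + x * u k) (1 + y * u j).
  move=> xC yC j kj; apply: comm_affine => //; try exact: central1.
  by apply: uC; lia.
have ybk : (1 + a * u k) * (1 + b * u k.+1) * (1 - m * a + (b - a) * u k) =
    (1 - m * a + (b - a) * u k.+1) * (1 + b * u k) * (1 + a * u k.+1).
  by apply: yang_baxter_affine => //;
    [apply: uQ; lia | apply: uQ; lia | exact: uB | exact: shift_factor].
transitivity (alpha u n k.+1 a * alpha u n k.+2 b *
    ((1 + a * u k) * (1 + b * u k.+1) * (1 - m * a + (b - a) * u k))).
  rewrite (alphaS a kn) (alphaS b k1n) !mulrA -[in LHS](mulrA _ (1 + a * u k)).
  by rewrite (comm_alpha (far _ _ aC bC)) !mulrA.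
have IHk := IH k.+1 isT k1n ltac:(lia).
rewrite ybk !mulrA IHk.
rewrite (alphaS b kn) (alphaS a k1n) !mulrA -[in LHS](mulrA _ _ (1 + b * u k)).
by rewrite -(comm_alpha (far _ _ bC aC)) !mulrA.
Qed.

Lemma alpha_comm_factor i : (1 <= i < n)%N ->
  alpha u n i a * alpha u n i b * (1 - m * a + (b - a) * u i) =
  alpha u n i b * alpha u n i a * (1 - m * a + (b - a) * u i).
Proof.
move=> i1n; have /andP[_ ilt] := i1n.
have hg : GRing.comm (1 + b * u i) (1 - m * a + (b - a) * u i).
  by apply: comm_affine => //; exact: central1.
rewrite {1}(alphaS b ilt) mulrA -(mulrA _ (1 + b * u i)) hg mulrA alpha_swap_factor //.
rewrite (alphaS a ilt) mulrA -(mulrA _ (1 + a * u i)).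
by rewrite (factor_mul_affine mC (uQ i1n) pC qC shift_factor) [RHS]mulrA -pC mulrA.
Qed.

End Hecke.

Section PolyX.
Variable R : nzRingType.
Implicit Types (c : R) (p q : {poly R}).

Lemma centralC c : central c -> central c%:P.
Proof. by move=> cC p; apply/polyP => i; rewrite coefCM coefMC; apply: cC. Qed.

Lemma centralX : central ('X : {poly R}).
Proof. by move=> p; apply/commr_sym/commr_polyX. Qed.

Lemma rreg_1subMX q : GRing.rreg (1 - q * 'X).
Proof.
suff eq0 p : p * (1 - q * 'X) = 0 -> p = 0.
  by move=> p1 p2 /eqP; rewrite -subr_eq0 -mulrBl => /eqP/eq0/eqP; rewrite subr_eq0 => /eqP.
rewrite mulrBr mulr1 => /eqP; rewrite subr_eq0 => /eqP pE.
have pXE k : p = p * (q * 'X) ^+ k.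
  by elim: k => [|k IH]; rewrite ?expr0 ?mulr1 // exprSr mulrA -IH.
apply/polyP => j; rewrite coef0 (pXE j.+1) exprMn_comm; last exact: commr_polyX.
by rewrite mulrA coefMXn ltnSn.
Qed.

End PolyX.

Theorem mainTheorem11 (B : ringType) (n : nat) (mu1 mu2 : B) (x u : nat -> B) :
  (2 <= n)%N ->
  (forall b : B, mu1 * b = b * mu1) ->
  (forall b : B, mu2 * b = b * mu2) ->
  (forall (j : nat) (b : B), (1 <= j <= n)%N -> x j * b = b * x j) ->
  (forall i j : nat, (1 <= i < n)%N -> (1 <= j < n)%N ->
     (i.+1 < j)%N || (j.+1 < i)%N -> u i * u j = u j * u i) ->
  (forall i : nat, (1 <= i)%N -> (i.+1 < n)%N ->
     u i * u i.+1 * u i = u i.+1 * u i * u i.+1) ->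
  (forall i : nat, (1 <= i < n)%N -> u i * u i = - (mu1 * u i)) ->
  (forall i : nat, (1 <= i < n)%N -> mu2 * x i * x i.+1 * u i = 0) ->
  forall i : nat, (1 <= i < n)%N ->
    alpha u n i (x i) * alpha u n i (x i.+1) =
    alpha u n i (x i.+1) * alpha u n i (x i).
Proof.
move=> _ mu1C _ xC uC uB uQ _ i i1n.
pose U j := (u j)%:P; pose a := (x i)%:P * 'X; pose b := (x i.+1)%:P * 'X.
have CX (c : B) : central c -> central (c%:P * 'X).
  by move=> cC; exact: centralM (centralC cC) (@centralX B).
have aC : central a by apply/CX => r; apply: xC; lia.
have bC : central b by apply/CX => r; apply: xC; lia.
have UC j k : (1 <= j < n)%N -> (1 <= k < n)%N -> (j.+1 < k)%N || (k.+1 < j)%N ->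
    GRing.comm (U j) (U k).
  by move=> *; rewrite /GRing.comm -!polyCM uC.
have UB j : (1 <= j)%N -> (j.+1 < n)%N -> U j * U j.+1 * U j = U j.+1 * U j * U j.+1.
  by move=> *; rewrite -!polyCM uB.
have UQ j : (1 <= j < n)%N -> U j * U j = - (mu1%:P * U j).
  by move=> *; rewrite -!polyCM uQ // polyCN.
have factorE : 1 - mu1%:P * a + (b - a) * U i =
    1 - (mu1%:P * (x i)%:P - ((x i.+1)%:P - (x i)%:P) * U i) * 'X.
  by rewrite /a /b -mulrBl -mulrA -commr_polyX !mulrA [in RHS]mulrBl opprB addrA addrAC.
have ev1 : commr_rmorph (@idfun B) 1 := fun r => commr_sym (commr1 r).
have evX c : horner_morph ev1 (c%:P * 'X) = c.
  by rewrite rmorphM /= horner_morphC horner_morphX mulr1.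
have evU : horner_morph ev1 \o U =1 u by move=> j; exact: horner_morphC.
have := alpha_comm_factor (centralC mu1C) UC UB UQ aC bC i1n.
rewrite factorE => /rreg_1subMX /(congr1 (horner_morph ev1)).
by rewrite !rmorphM !(rmorph_alpha evU) /= /a /b !evX.
Qed.
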